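(* Let $(R,\mathfrak{m})$ be a Noetherian local ring and let $J\subseteq I$ be two ideals of $R$. Let $x_1,\ldots,x_s$ be a minimal generating set of $J$. Write $J_0=0$ and $J_i=(x_1,\ldots,x_i)$ for $i=1,\ldots,s$. Let $n\geq 2$. Then the following are equivalent: (i) $H_1(x_1t,\ldots,x_it;\mathbf{R}(I))_n=0$ for all $i=1,\ldots,s$; (ii) $\big((J_{i-1}I^{n-1}:x_i)\cap I^{n-1}\big)/J_{i-1}I^{n-2}=0$ for all $i=1,\ldots,s$. Suppose in addition that $x_1,\ldots,x_s$ is an $R$-sequence and that $x_1^*,\ldots,x_{s-1}^*$ is a $\mathbf{G}(I)$-sequence. Then $H_1(x_1t,\ldots,x_it;\mathbf{R}(I))_n=0$ for all $n\geq 2$ and all $i=1,\ldots,s$.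
   Context: $\mathbf{R}(I)=\bigoplus_{n\geq0}I^nt^n$ is the Rees algebra, $\mathbf{G}(I)=\bigoplus_{n\geq0}I^n/I^{n+1}$ the associated graded ring, and $x_i^*$ the class of $x_i$ in $I/I^2$; $I^0=R$. For degree-one elements $z_1,\ldots,z_m$ of $U=\mathbf{R}(I)$, $H_1(z_1,\ldots,z_m;U)_n$ is the first homology of the degree-$n$ strand of the Koszul complex $\wedge_2(R^m)\otimes U_{n-2}\to\wedge_1(R^m)\otimes U_{n-1}\to U_n$, with differentials $e_i\wedge e_j\otimes u\mapsto e_j\otimes z_iu-e_i\otimes z_ju$ and $e_i\otimes v\mapsto z_iv$. *)

From HB Require Import structures.
From mathcomp Require Import all_boot all_order all_algebra.
Set Implicit Arguments. Unset Strict Implicit. Unset Printing Implicit Defensive.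
Import Order.TTheory GRing.Theory.
Local Open Scope ring_scope.

Section Defs.
Variable R : comUnitRingType.

Definition is_ideal (S : R -> Prop) : Prop :=
  [/\ S 0, (forall a b, S a -> S b -> S (a + b)) & (forall c a, S a -> S (c * a))].

Definition gen (s : seq R) : R -> Prop :=
  fun r => exists c : 'I_(size s) -> R, r = \sum_(i < size s) c i * s`_i.

Definition iadd (I J : R -> Prop) : R -> Prop :=
  fun r => exists a b, [/\ I a, J b & r = a + b].

Definition imul (I J : R -> Prop) : R -> Prop :=
  fun r => exists (k : nat) (a b : nat -> R),
    (forall i, (i < k)%N -> I (a i) /\ J (b i)) /\ r = \sum_(i < k) a i * b i.

Definition ipow (I : R -> Prop) (n : nat) : R -> Prop :=
  iter n (imul I) (fun _ => True).

Definition noetherian : Prop :=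
  forall S : R -> Prop, is_ideal S -> exists s : seq R, forall r, S r <-> gen s r.

(* local: the non-units form an ideal (R is nonzero as a unit ring) *)
Definition local_ring : Prop :=
  forall a b : R, a \isn't a GRing.unit -> b \isn't a GRing.unit ->
    (a + b) \isn't a GRing.unit.

Definition minimal_generating (J : R -> Prop) (x : seq R) : Prop :=
  (forall r, J r <-> gen x r) /\
  (forall y : seq R, (forall r, J r <-> gen y r) -> (size x <= size y)%N).

(* H_1(z_1 t, ..., z_m t; R(I))_n = 0, for n >= 2.  The degree-k strand of
   the Rees algebra R(I) = ⊕ I^k t^k is U_k = I^k t^k ≅ I^k, so the strand
   ∧2(R^m)⊗U_{n-2} -> R^m⊗U_{n-1} -> U_n is
   e_j∧e_k ⊗ u |-> e_k ⊗ z_j u - e_j ⊗ z_k u  (j < k),  e_j ⊗ v |-> z_j v.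
   Vanishing of H_1 = exactness at the middle term. *)
Definition H1_zero (I : R -> Prop) (z : seq R) (n : nat) : Prop :=
  forall v : 'I_(size z) -> R,
    (forall j, ipow I n.-1 (v j)) ->
    \sum_(j < size z) z`_j * v j = 0 ->
    exists u : 'I_(size z) -> 'I_(size z) -> R,
      (forall j k, ipow I (n - 2) (u j k)) /\
      (forall l : 'I_(size z),
         v l = \sum_(j < size z | (j < l)%N) z`_j * u j l
             - \sum_(k < size z | (l < k)%N) z`_k * u l k).

(* condition (ii) for index i (1-based):
   ((J_{i-1} I^{n-1} : x_i) ∩ I^{n-1}) / J_{i-1} I^{n-2} = 0,
   i.e. ((J_{i-1} I^{n-1} : x_i) ∩ I^{n-1}) ⊆ J_{i-1} I^{n-2}
   (the reverse inclusion always holds, so the quotient makes sense). *)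
Definition colon_zero (I : R -> Prop) (x : seq R) (i n : nat) : Prop :=
  forall r, ipow I n.-1 r ->
    imul (gen (take i.-1 x)) (ipow I n.-1) (x`_(i.-1) * r) ->
    imul (gen (take i.-1 x)) (ipow I (n - 2)) r.

Definition R_sequence (x : seq R) : Prop :=
  (forall i, (i < size x)%N ->
     forall r, gen (take i x) (x`_i * r) -> gen (take i x) r) /\
  ~ gen x 1.

(* degree-d part of the ideal (y_1^#, ..., y_k^#) G(I), pulled back to I^d:
   (y) I^{d-1}, and 0 in degree 0 *)
Definition low_part (I : R -> Prop) (y : seq R) (d : nat) : R -> Prop :=
  if d is d'.+1 then imul (gen y) (ipow I d') else (fun r => r = 0).

(* y_1^#, ..., y_k^# (classes of y_i in I/I^2) is a G(I)-sequence, where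
   G(I) = ⊕ I^d/I^{d+1}.  Written degreewise: the d-th graded component of
   G(I)/(y_1^#..y_{i-1}^#)G(I) is I^d / (I^{d+1} + (y_{<i}) I^{d-1}), and
   y_i^# maps degree d to degree d+1 by multiplication by y_i. *)
Definition G_sequence (I : R -> Prop) (y : seq R) : Prop :=
  (forall i, (i < size y)%N -> forall d a, ipow I d a ->
     iadd (ipow I d.+2) (low_part I (take i y) d.+1) (y`_i * a) ->
     iadd (ipow I d.+1) (low_part I (take i y) d) a) /\
  (exists d a, ipow I d a /\ ~ iadd (ipow I d.+1) (low_part I y d) a).

End Defs.

(* Writing a relation of x_1 t, ..., x_{k+1} t in degree n as
   v_1 x_1 + ... + v_k x_k + v_{k+1} x_{k+1} = 0 with v_j in I^{n-1}, the last
   coefficient v_{k+1} lies in (J_k I^{n-1} : x_{k+1}) ∩ I^{n-1}; when this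
   colon ideal is J_k I^{n-2}, subtracting a Koszul boundary kills v_{k+1} and
   reduces to a relation of x_1 t, ..., x_k t, so (ii) gives (i) by induction on
   k; conversely a relation with v_{k+1} = r shows r lies in J_k I^{n-2}.
   For the second part, the R-sequence property puts the colon ideal inside
   J_k ∩ I^{n-1}, and the G(I)-sequence property gives the Valabrega-Valla
   equality J_k ∩ I^{m+1} = J_k I^m, by lowering the degree of the coefficients
   one step at a time. *)
From HB Require Import structures.
From mathcomp Require Import all_boot all_order all_algebra.
From mathcomp Require Import zify ring.
Import GRing.Theory.
Local Open Scope ring_scope.
Set Implicit Arguments. Unset Strict Implicit. Unset Printing Implicit Defensive.

Section Ideals.
Variable R : comUnitRingType.
Implicit Types (I A B : R -> Prop).

Lemma ideal0 I : is_ideal I -> I 0.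
Proof. by case. Qed.

Lemma idealD I a b : is_ideal I -> I a -> I b -> I (a + b).
Proof. by case=> _ hD _; apply: hD. Qed.

Lemma idealMl I c a : is_ideal I -> I a -> I (c * a).
Proof. by case=> _ _ hM; apply: hM. Qed.

Lemma idealN I a : is_ideal I -> I a -> I (- a).
Proof. by move=> hI ha; rewrite -mulN1r; apply: idealMl. Qed.

Lemma idealB I a b : is_ideal I -> I a -> I b -> I (a - b).
Proof. by move=> hI ha hb; apply: idealD => //; apply: idealN. Qed.

Lemma imul_ideal A B : (forall c a, A a -> A (c * a)) -> is_ideal (imul A B).
Proof.
move=> hA; split.
- by exists 0%N, (fun _ => 0), (fun _ => 0); rewrite big_ord0.
- move=> a b [k1 [a1 [b1 [h1 ->]]]] [k2 [a2 [b2 [h2 ->]]]].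
  exists (k1 + k2)%N, (fun i => if (i < k1)%N then a1 i else a2 (i - k1)%N),
     (fun i => if (i < k1)%N then b1 i else b2 (i - k1)%N); split.
  + move=> i hi; case: ifPn => hik; first exact: h1.
    by apply: h2; rewrite -leqNgt in hik; lia.
  + rewrite big_split_ord /=; congr (_ + _); apply: eq_bigr => i _ /=.
      by rewrite ltn_ord.
    by rewrite ltnNge leq_addr /= addKn.
- move=> c a [k [a1 [b1 [h ->]]]]; exists k, (fun i => c * a1 i), b1; split.
  + by move=> i /h [ha hb]; split => //; apply: hA.
  + by rewrite mulr_sumr; apply: eq_bigr => i _; rewrite mulrA.
Qed.

Lemma ipow_ideal I n : is_ideal I -> is_ideal (ipow I n).
Proof. by case: n => [|n] [_ _ hI]; [split | apply: imul_ideal]. Qed.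

Lemma imul_mul A B a b : A a -> B b -> imul A B (a * b).
Proof. by move=> ha hb; exists 1%N, (fun _ => a), (fun _ => b); rewrite big_ord1. Qed.

Lemma imul_monor A B B' r : (forall z, B z -> B' z) -> imul A B r -> imul A B' r.
Proof.
move=> hB [k [a [b [h ->]]]]; exists k, a, b; split => // i /h [? ?].
by split => //; apply: hB.
Qed.

Lemma ipow0 I n : is_ideal I -> ipow I n 0.
Proof. by move=> /(ipow_ideal n) /ideal0. Qed.

Lemma ipowS_sub I n r : ipow I n.+1 r -> ipow I n r.
Proof.
elim: n r => [|n IH] r h //.
exact: (imul_monor IH h).
Qed.

End Ideals.

Section LinearCombinations.
Variable R : comUnitRingType.
Implicit Types (P Q : R -> Prop) (s x : seq R).

(* Combinations indexed by nat rather than by ['I_k], so that one [x] serves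
   for all its prefixes [take k x]. *)
Definition lincomb P s k r :=
  exists c : nat -> R, (forall j, (j < k)%N -> P (c j)) /\ r = \sum_(j < k) s`_j * c j.

Lemma lincomb0 P s k : P 0 -> lincomb P s k 0.
Proof. by exists (fun _ => 0); split => //; rewrite big1 // => j _; rewrite mulr0. Qed.

Lemma lincomb_mono P Q s k r : (forall z, P z -> Q z) -> lincomb P s k r -> lincomb Q s k r.
Proof. by move=> h [c [hc ->]]; exists c; split => // j /hc /h. Qed.

Lemma lincombD P s k a b : is_ideal P ->
  lincomb P s k a -> lincomb P s k b -> lincomb P s k (a + b).
Proof.
move=> hP [c1 [hc1 ->]] [c2 [hc2 ->]]; exists (fun j => c1 j + c2 j); split.
  by move=> j hj; apply: idealD => //; [apply: hc1 | apply: hc2].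
by rewrite -big_split /=; apply: eq_bigr => j _; rewrite mulrDr.
Qed.

Lemma lincombN P s k a : is_ideal P -> lincomb P s k a -> lincomb P s k (- a).
Proof.
move=> hP [c [hc ->]]; exists (fun j => - c j); split; first by move=> j /hc /idealN; apply.
by rewrite -sumrN; apply: eq_bigr => j _; rewrite mulrN.
Qed.

Lemma lincomb_take P x k r : (k <= size x)%N ->
  lincomb P (take k x) (size (take k x)) r <-> lincomb P x k r.
Proof.
move=> hk; rewrite size_takel //; split => -[c [hc ->]]; exists c; split => //;
  by apply: eq_bigr => j _; rewrite nth_take.
Qed.

Lemma gen_lincomb s r : gen s r <-> lincomb (fun _ => True) s (size s) r.
Proof.
split.
- move=> [c ->]; exists (fun j => oapp c 0 (insub j)); split => //.
  by apply: eq_bigr => i _; rewrite valK mulrC.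
- by move=> [c [_ ->]]; exists (fun o => c o); apply: eq_bigr => i _; apply: mulrC.
Qed.

Lemma gen_nth s j : (j < size s)%N -> gen s s`_j.
Proof.
move=> hj; apply/gen_lincomb; exists (fun i => (i == j)%:R); split => //.
rewrite (bigD1 (Ordinal hj)) //= eqxx mulr1 big1 ?addr0 // => i hij.
suff -> : (i == j :> nat) = false by rewrite mulr0.
by apply: contraNF hij => /eqP h; apply/eqP/val_inj.
Qed.

Lemma imul_gen_lincomb P s r : is_ideal P -> imul (gen s) P r <-> lincomb P s (size s) r.
Proof.
move=> hP; split.
- move=> [k [a [b [h ->]]]].
  apply: (big_ind (lincomb P s (size s))); first by apply: lincomb0; apply: ideal0.
  + by move=> u w; apply: lincombD.
  + move=> i _; have [/gen_lincomb [c [_ ->]] hb] := h i (ltn_ord i).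
    exists (fun j => c j * b i); split; first by move=> j _; apply: idealMl.
    by rewrite mulr_suml; apply: eq_bigr => j _; rewrite mulrA.
- move=> [c [hc ->]]; exists (size s), (fun j => s`_j), c; split => // j hj.
  by split; [apply: gen_nth | apply: hc].
Qed.

Lemma gen_takeE x k r : (k <= size x)%N ->
  gen (take k x) r <-> lincomb (fun _ => True) x k r.
Proof. by move=> hk; rewrite gen_lincomb lincomb_take. Qed.

Lemma imul_gen_takeE I x k m r : is_ideal I -> (k <= size x)%N ->
  imul (gen (take k x)) (ipow I m) r <-> lincomb (ipow I m) x k r.
Proof. by move=> hI hk; rewrite imul_gen_lincomb ?lincomb_take //; apply: ipow_ideal. Qed.

Lemma lincombSE P s k r :
  lincomb P s k.+1 r <-> exists r' a, [/\ lincomb P s k r', P a & r = r' + s`_k * a].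
Proof.
split.
- move=> [c [hc ->]]; exists (\sum_(j < k) s`_j * c j), (c k); rewrite big_ord_recr.
  by split => //; [exists c; split => // j hj; apply: hc; apply: ltnW | apply: hc].
- move=> [_ [a [[c [hc ->]] ha ->]]].
  exists (fun j => if j == k then a else c j); split.
    by move=> j; rewrite ltnS leq_eqVlt; case: eqP => // _; apply: hc.
  rewrite big_ord_recr /= eqxx; congr (_ + _); apply: eq_bigr => j _.
  by rewrite (ltn_eqF (ltn_ord j)).
Qed.

End LinearCombinations.

Section KoszulHomology.
Variable R : comUnitRingType.
Variables (I : R -> Prop) (x : seq R).
Hypothesis hI : is_ideal I.

Definition koszul_boundary m (u : nat -> nat -> R) l :=
  \sum_(j < m | (j < l)%N) x`_j * u j l - \sum_(k < m | (l < k)%N) x`_k * u l k.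

Lemma eq_koszul_boundary m u u' l : (l < m)%N ->
  (forall i j, (i < m)%N -> (j < m)%N -> u i j = u' i j) ->
  koszul_boundary m u l = koszul_boundary m u' l.
Proof.
by move=> hl eq_u; congr (_ - _); apply: eq_bigr => j _; rewrite eq_u.
Qed.

Lemma sum_ord_recr_cond (F : nat -> R) (P : pred nat) k :
  \sum_(j < k.+1 | P j) F j = \sum_(j < k | P j) F j + (if P k then F k else 0).
Proof. by rewrite big_mkcond big_ord_recr /= -big_mkcond. Qed.

Lemma koszul_boundaryS m u l : (l < m)%N ->
  koszul_boundary m.+1 u l = koszul_boundary m u l - x`_m * u l m.
Proof.
move=> hl; rewrite /koszul_boundary.
rewrite (sum_ord_recr_cond (fun j => x`_j * u j l) (fun j => (j < l)%N)).
rewrite (sum_ord_recr_cond (fun k => x`_k * u l k) (fun k => (l < k)%N)).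
rewrite hl ltnNge ltnW //= addr0.
by rewrite opprD addrA.
Qed.

Lemma koszul_boundary_last m u :
  koszul_boundary m.+1 u m = \sum_(j < m) x`_j * u j m.
Proof.
rewrite /koszul_boundary.
rewrite (sum_ord_recr_cond (fun j => x`_j * u j m) (fun j => (j < m)%N)) ltnn addr0.
rewrite [X in _ - X]big1 => [|k].
  by rewrite subr0; apply: eq_bigl => j; rewrite ltn_ord.
by rewrite ltnNge -ltnS ltn_ord.
Qed.

(* [H1_vanish m n] is [H_1(x_1 t, ..., x_m t; R(I))_n = 0], and
   [colon_vanish k n] is condition (ii) for the index [k + 1]. *)
Definition H1_vanish m n := forall v : nat -> R,
  (forall j, (j < m)%N -> ipow I n.-1 (v j)) -> \sum_(j < m) x`_j * v j = 0 ->
  exists u : nat -> nat -> R, (forall j k, ipow I (n - 2) (u j k)) /\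
    (forall l, (l < m)%N -> v l = koszul_boundary m u l).

Definition colon_vanish k n := forall r, ipow I n.-1 r ->
  lincomb (ipow I n.-1) x k (x`_k * r) -> lincomb (ipow I (n - 2)) x k r.

Lemma H1_zero_take m n : (m <= size x)%N -> H1_zero I (take m x) n <-> H1_vanish m n.
Proof.
move=> hm; have hxm j : (j < m)%N -> (take m x)`_j = x`_j by move=> hj; rewrite nth_take.
rewrite /H1_zero size_takel //; split.
- move=> H v hv hs.
  have hs' : \sum_(j < m) (take m x)`_j * v j = 0.
    by rewrite -[RHS]hs; apply: eq_bigr => j _; rewrite hxm.
  have [u [hu huv]] := H (fun j => v j) (fun j => hv j (ltn_ord j)) hs'.
  exists (fun j k => oapp (fun a => oapp (u a) 0 (insub k)) 0 (insub j)); split.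
    move=> j k; case: (insub j) => [a|] /=; last exact: ipow0.
    by case: (insub k) => [b|] /=; [apply: hu | apply: ipow0].
  move=> l hl; rewrite (huv (Ordinal hl)) /koszul_boundary.
  by congr (_ - _); apply: eq_bigr => j _ /=; rewrite !valK insubT /= hxm.
- move=> H v hv hs.
  pose w j := oapp v 0 (insub j).
  have hw j : (j < m)%N -> ipow I n.-1 (w j).
    by rewrite /w; case: insub => [a|] /= _; [apply: hv | apply: ipow0].
  have hs' : \sum_(j < m) x`_j * w j = 0.
    by rewrite -[RHS]hs; apply: eq_bigr => j _; rewrite /w valK hxm.
  have [u [hu huv]] := H w hw hs'.
  exists (fun a b => u a b); split => // l.
  have := huv l (ltn_ord l); rewrite /w valK /= => ->; rewrite /koszul_boundary.
  by congr (_ - _); apply: eq_bigr => j _; rewrite hxm.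
Qed.

Lemma colon_zero_succ k n : (k < size x)%N -> colon_zero I x k.+1 n <-> colon_vanish k n.
Proof.
move=> /ltnW hk; rewrite /colon_zero /=.
by split=> H r hr /(imul_gen_takeE _ _ hI hk) /(H r hr) /(imul_gen_takeE _ _ hI hk).
Qed.

Lemma colon_vanish_of_H1 k n : H1_vanish k.+1 n -> colon_vanish k n.
Proof.
move=> H r hr [w [hw hxr]].
pose v j := if j == k then r else - w j.
have hv j : (j < k.+1)%N -> ipow I n.-1 (v j).
  rewrite /v ltnS leq_eqVlt; case: eqP => //= _ /hw.
  by apply: idealN; apply: ipow_ideal.
have hs : \sum_(j < k.+1) x`_j * v j = 0.
  rewrite big_ord_recr /= /v eqxx.
  under eq_bigr => j _ do rewrite (ltn_eqF (ltn_ord j)) mulrN.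
  by rewrite sumrN -hxr addNr.
have [u [hu huv]] := H v hv hs.
exists (fun j => u j k); split; first by move=> j _; apply: hu.
by have := huv k (ltnSn k); rewrite /v eqxx koszul_boundary_last.
Qed.

Hypothesis hx : forall j, I x`_j.

Lemma H1_vanishS k n : (2 <= n)%N ->
  H1_vanish k n -> colon_vanish k n -> H1_vanish k.+1 n.
Proof.
move=> hn IH hc v hv hs.
have hn1 : n.-1 = (n - 2).+1 by lia.
have hxk : lincomb (ipow I n.-1) x k (x`_k * v k).
  exists (fun j => - v j); split.
    by move=> j hj; apply: idealN; [apply: ipow_ideal | apply/hv/ltnW].
  rewrite big_ord_recr /= in hs; under eq_bigr => j _ do rewrite mulrN.
  by rewrite sumrN; apply/eqP; rewrite -addr_eq0 addrC hs.
have [e [he hve]] := hc (v k) (hv k (ltnSn k)) hxk.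
(* [v'] is [v] minus the Koszul boundary of [sum_(j < k) e j (b_j /\ b_k)], for
   the standard basis [b]; its [k]-th entry vanishes. *)
pose v' j := v j + x`_k * e j.
have hv' j : (j < k)%N -> ipow I n.-1 (v' j).
  move=> hj; apply: idealD; [exact: ipow_ideal | apply/hv/ltnW/hj |].
  by rewrite hn1; apply: imul_mul (hx k) (he j hj).
have hs' : \sum_(j < k) x`_j * v' j = 0.
  rewrite big_ord_recr /= in hs; rewrite /v'.
  under eq_bigr => j _ do rewrite mulrDr mulrCA.
  by rewrite big_split /= -mulr_sumr -hve.
have [u' [hu' huv']] := IH v' hv' hs'.
pose u j l := if l == k then (if (j < k)%N then e j else 0) else u' j l.
exists u; split.
  move=> j l; rewrite /u; case: ifP => _; last exact: hu'.
  by case: ifP => hj; [apply: he | apply: ipow0].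
move=> l; rewrite ltnS leq_eqVlt => /predU1P [->|hlk].
- rewrite koszul_boundary_last hve; apply: eq_bigr => j _.
  by rewrite /u eqxx ltn_ord.
- rewrite koszul_boundaryS // (@eq_koszul_boundary _ _ u') // => [|i j _ hj].
    by rewrite -huv' // /u eqxx hlk /v' addrK.
  by rewrite /u (ltn_eqF hj).
Qed.

Lemma H1_vanish_of_colon m n : (2 <= n)%N ->
  (forall k, (k < m)%N -> colon_vanish k n) -> H1_vanish m n.
Proof.
move=> hn; elim: m => [_|m IH hc].
  by move=> v _ _; exists (fun _ _ => 0); split => // j k; apply: ipow0.
apply: H1_vanishS => //; last exact: hc.
by apply: IH => k hk; apply/hc/ltnW.
Qed.

End KoszulHomology.

Section ValabregaValla.
Variable R : comUnitRingType.
Variables (I : R -> Prop) (x : seq R).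
Hypotheses (hI : is_ideal I) (hx : forall j, I x`_j).
Hypothesis hG : G_sequence I (take (size x).-1 x).

Lemma G_sequence_take k d a : (k.+1 < size x)%N -> ipow I d a ->
  iadd (ipow I d.+2) (low_part I (take k x) d.+1) (x`_k * a) ->
  iadd (ipow I d.+1) (low_part I (take k x) d) a.
Proof.
move=> hk; have [hGs _] := hG; have hkx : (k <= (size x).-1)%N by lia.
have hk' : (k < size (take (size x).-1 x))%N by rewrite size_takel ?leq_pred //; lia.
by have := hGs k hk' d a; rewrite take_takel // nth_take //; lia.
Qed.

Lemma low_part_mul k d q : (k <= size x)%N ->
  low_part I (take k x) d q -> lincomb (ipow I d) x k (x`_k * q).
Proof.
case: d => [|d] hk /=; first by move=> ->; rewrite mulr0; apply: lincomb0.
move=> /(imul_gen_takeE _ _ hI hk) [e [he ->]].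
exists (fun j => x`_k * e j); split; first by move=> j /he; apply: imul_mul.
by rewrite mulr_sumr; apply: eq_bigr => j _; rewrite mulrCA.
Qed.

Lemma lincomb_ipow_lower k d r : (k < size x)%N ->
  lincomb (ipow I d) x k r -> ipow I d.+2 r -> lincomb (ipow I d.+1) x k r.
Proof.
elim: k d r => [|k IH] d r hk.
  by move=> [c [_ ->]] _; exists c; split => // j; rewrite ltn0.
have hkx : (k <= size x)%N by apply/ltnW/ltnW.
move=> /lincombSE [r' [a [hr' ha ->]]] hrI.
have hxa : iadd (ipow I d.+2) (low_part I (take k x) d.+1) (x`_k * a).
  exists (r' + x`_k * a), (- r'); split => //=; last by rewrite addrAC subrr add0r.
  by apply/(imul_gen_takeE _ _ hI hkx); apply: lincombN hr'; apply: ipow_ideal.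
have [p [q [hp hq def_a]]] := G_sequence_take hk ha hxa; subst a.
have hxp : ipow I d.+2 (x`_k * p) by apply: imul_mul (hx k) hp.
have hrq : lincomb (ipow I d.+1) x k (r' + x`_k * q).
  apply: IH (ltnW hk) _ _; first exact: lincombD (ipow_ideal _ hI) hr' (low_part_mul hkx hq).
  have -> : r' + x`_k * q = r' + x`_k * (p + q) - x`_k * p by ring.
  exact: idealB (ipow_ideal _ hI) hrI hxp.
by apply/lincombSE; exists (r' + x`_k * q), p; split => //; ring.
Qed.

Lemma lincomb_cap_ipow k m r : (k < size x)%N ->
  lincomb (fun _ => True) x k r -> ipow I m.+1 r -> lincomb (ipow I m) x k r.
Proof.
move=> hk hr; elim: m => [_ | m IH /[dup] /ipowS_sub /IH hrm]; first exact: hr.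
exact: lincomb_ipow_lower.
Qed.

Lemma colon_vanish_of_R_sequence k n : (2 <= n)%N -> (k < size x)%N ->
  R_sequence x -> colon_vanish I x k n.
Proof.
move=> hn hk [hR _] r hr hxr; have hkx := ltnW hk.
have hr0 : lincomb (fun _ => True) x k r.
  by apply/(gen_takeE _ hkx)/hR => //; apply/(gen_takeE _ hkx); apply: lincomb_mono hxr.
by apply: lincomb_cap_ipow hk hr0 _; rewrite -subSn // subSS subn1.
Qed.

End ValabregaValla.

Unset Implicit Arguments.

Theorem lemma3p3 (R : comUnitRingType) (I J : R -> Prop) (x : seq R) :
  noetherian R -> local_ring R -> is_ideal I -> is_ideal J ->
  (forall r, J r -> I r) -> minimal_generating J x ->
  (forall n : nat, (2 <= n)%N ->
     ((forall i, (1 <= i <= size x)%N -> H1_zero I (take i x) n) <->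
      (forall i, (1 <= i <= size x)%N -> colon_zero I x i n))) /\
  (R_sequence x -> G_sequence I (take (size x).-1 x) ->
     forall n i, (2 <= n)%N -> (1 <= i <= size x)%N -> H1_zero I (take i x) n).
Proof.
move=> _ _ hI _ hJI [hJx _].
have hx j : I x`_j.
  case: (ltnP j (size x)) => hj; first exact/hJI/hJx/gen_nth.
  by rewrite nth_default //; apply: ideal0.
split.
- move=> n hn; split=> H [|k] // /andP [_ hk].
  + apply/(colon_zero_succ hI n hk)/(colon_vanish_of_H1 hI).
    by apply/(H1_zero_take hI n hk)/H.
  + apply/(H1_zero_take hI n hk)/(H1_vanish_of_colon hI hx hn) => j hj.
    by apply/(colon_zero_succ hI n (leq_trans hj hk))/H; rewrite /= (leq_trans hj hk).
- move=> hR hG n [|k] hn // /andP [_ hk].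
  apply/(H1_zero_take hI n hk)/(H1_vanish_of_colon hI hx hn) => j hj.
  by apply: (colon_vanish_of_R_sequence hI hx hG) => //; apply: leq_trans hj hk.
Qed.
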